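(* Let $T = \prod_{n\in\omega} T_n \subseteq \omega^\omega$ where each $T_n \subseteq \omega$ has $|T_n| \leq n+1$. Then there exists a strictly increasing $g \in \omega^\omega$ such that for every strictly increasing $f \in T$: $f(n) < g(n)$ for all $n\in\omega$, and for all $m,n\in\omega$, whenever $g(n) \geq f(m)$ we have $g(n+1) > f(m+2)$. *)

From Stdlib Require Import Arith List.
Import ListNotations.

Definition card_le (S : nat -> Prop) (k : nat) : Prop :=
  exists l : list nat, length l <= k /\ forall x, S x -> In x l.

Definition strictly_increasing (f : nat -> nat) : Prop :=
  forall m n, m < n -> f m < f n.

Definition mem_prod (T : nat -> nat -> Prop) (f : nat -> nat) : Prop :=
  forall n, T n (f n).

(* Only the finiteness of each T n matters.  Pick a nondecreasing B with
   T n contained in [0, B n]; then every f in T is dominated by B.  Put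
   g 0 > B 0 and g (n + 1) > max (g n) (B (g n + 2)).  If f m <= g n for a
   strictly increasing f, then m <= f m <= g n, hence
   f (m + 2) <= B (m + 2) <= B (g n + 2) < g (n + 1). *)
From Stdlib Require Import Arith List Lia ClassicalEpsilon.

Lemma strictly_increasing_S (f : nat -> nat) :
  (forall n, f n < f (S n)) -> strictly_increasing f.
Proof.
  intros Hf m n Hmn; induction Hmn as [|n _ IH]; [apply Hf|].
  specialize (Hf n); lia.
Qed.

Lemma strictly_increasing_ge_id (f : nat -> nat) :
  strictly_increasing f -> forall n, n <= f n.
Proof.
  intros Hf n; induction n as [|n IH]; [lia|].
  assert (f n < f (S n)) by (apply Hf; lia); lia.
Qed.

Lemma card_le_bounded (P : nat -> Prop) (k : nat) :
  card_le P k -> exists b, forall x, P x -> x <= b.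
Proof.
  intros [l [_ Hl]]; exists (list_max l); intros x Hx.
  assert (Hmax := proj1 (list_max_le l (list_max l)) (le_n _)).
  rewrite Forall_forall in Hmax; auto.
Qed.

Fixpoint prefix_max (b : nat -> nat) (n : nat) : nat :=
  match n with
  | 0 => b 0
  | S k => Nat.max (prefix_max b k) (b (S k))
  end.

Lemma prefix_max_mono (b : nat -> nat) (m n : nat) :
  m <= n -> prefix_max b m <= prefix_max b n.
Proof. induction 1; simpl; lia. Qed.

Lemma le_prefix_max (b : nat -> nat) (n : nat) : b n <= prefix_max b n.
Proof. destruct n; simpl; lia. Qed.

Lemma monotone_bound_of_bounded (T : nat -> nat -> Prop) :
  (forall n, exists b, forall x, T n x -> x <= b) ->
  exists B : nat -> nat, (forall m n, m <= n -> B m <= B n) /\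
    (forall n x, T n x -> x <= B n).
Proof.
  intros hb.
  set (b := fun n => proj1_sig (constructive_indefinite_description _ (hb n))).
  assert (Hb : forall n x, T n x -> x <= b n).
  { intros n; exact (proj2_sig (constructive_indefinite_description _ (hb n))). }
  exists (prefix_max b); split; [apply prefix_max_mono|].
  intros n x Hx; specialize (Hb n x Hx); pose proof (le_prefix_max b n); lia.
Qed.

Section Escape.

Variable B : nat -> nat.
Hypothesis B_mono : forall m n, m <= n -> B m <= B n.

Fixpoint escape (n : nat) : nat :=
  match n with
  | 0 => S (B 0)
  | S k => S (escape k + B (escape k + 2))
  end.

Lemma escape_strictly_increasing : strictly_increasing escape.
Proof. apply strictly_increasing_S; simpl; lia. Qed.

Variable f : nat -> nat.
Hypothesis f_le_B : forall n, f n <= B n.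

Lemma escape_gt : forall n, f n < escape n.
Proof.
  intros [|n]; simpl; [specialize (f_le_B 0); lia|].
  pose proof (strictly_increasing_ge_id _ escape_strictly_increasing n).
  specialize (f_le_B (S n)); specialize (B_mono (S n) (escape n + 2)); lia.
Qed.

Lemma escape_overtakes_shift2 :
  strictly_increasing f ->
  forall m n, f m <= escape n -> f (m + 2) < escape (n + 1).
Proof.
  intros Hf m n Hmn; rewrite Nat.add_1_r; simpl.
  pose proof (strictly_increasing_ge_id f Hf m).
  specialize (f_le_B (m + 2)); specialize (B_mono (m + 2) (escape n + 2)); lia.
Qed.

End Escape.

Theorem lemma3p6 (T : nat -> nat -> Prop)
  (hT : forall n, card_le (T n) (S n)) :
  exists g : nat -> nat, strictly_increasing g /\
    forall f : nat -> nat, mem_prod T f -> strictly_increasing f ->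
      (forall n, f n < g n) /\
      (forall m n, f m <= g n -> f (m + 2) < g (n + 1)).
Proof.
  destruct (monotone_bound_of_bounded T (fun n => card_le_bounded _ _ (hT n)))
    as [B [B_mono B_bounds]].
  exists (escape B); split; [apply escape_strictly_increasing|].
  intros f Hf f_incr.
  assert (f_le_B : forall n, f n <= B n) by (intros n; apply B_bounds, Hf).
  split.
  - exact (escape_gt B B_mono f f_le_B).
  - exact (escape_overtakes_shift2 B B_mono f f_le_B f_incr).
Qed.
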